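(* Let $A=(a_1\ a_2\ a_3)$ with positive integers $a_1<a_2<a_3$ be such that the toric ideal $I_A$ is not a complete intersection. Let $M=\{g_1=(-c_1,v_{12},v_{13}),\ g_2=(v_{21},-c_2,v_{23}),\ g_3=(v_{31},v_{32},-c_3)\}$ be a minimal Markov basis for $A$, where all $c_i$ and $v_{ij}$ are positive integers. Then the following are equivalent: (1) $M$ is distance reducing; (2) $M$ reduces the distance of the circuit $z=\gamma(0,a_3,-a_2)$ where $\gamma=1/\gcd(a_2,a_3)$; (3) at least one of $v_{21}<c_2+v_{23}$ or $v_{31}<v_{32}+c_3$ holds.
   Context: For $z\in\mathbb Z^n$, $z^+,z^-\in\mathbb N^n$ denote the unique vectors with disjoint supports and $z=z^+-z^-$; $\|\cdot\|$ is the $1$-norm. The toric ideal is $I_A=\langle x^{u^+}-x^{u^-}:u\in\ker(A)\rangle$; it is a complete intersection if it is generated by $\dim\ker(A)$ elements. A Markov basis is a set $B\subseteq\ker(A)$ whose binomials $x^{u^+}-x^{u^-}$ generate $I_A$; minimal means no proper subset is a Markov basis. For nonzero $z\in\ker(A)$, $u\in\ker(A)$ reduces the distance of $z$ if there exist $(p,q)\in\{(z^+,z^-),(z^-,z^+)\}$ and $\varepsilon\in\{\pm1\}$ with $p+\varepsilon u\in\mathbb N^n$ and $\|p+\varepsilon u-q\|<\|z\|$. $B$ reduces the distance of $Z$ if each nonzero $z\in Z$ has its distance reduced by some element of $B$; $B$ is distance reducing if it reduces the distance of $\ker(A)$. *)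

From HB Require Import structures.
From mathcomp Require Import all_boot all_order all_algebra.
From mathcomp Require Import mpoly.
Set Implicit Arguments. Unset Strict Implicit. Unset Printing Implicit Defensive.
Import Order.TTheory GRing.Theory Num.Theory.
Local Open Scope ring_scope.

Definition inker (d n : nat) (A : 'M[int]_(d, n)) (u : 'rV[int]_n) : Prop :=
  A *m u^T = 0.

Definition posv (n : nat) (z : 'rV[int]_n) : 'rV[int]_n :=
  \row_i Num.max (z 0 i) 0.
Definition negv (n : nat) (z : 'rV[int]_n) : 'rV[int]_n :=
  \row_i Num.max (- z 0 i) 0.

Definition norm1 (n : nat) (v : 'rV[int]_n) : int := \sum_i `|v 0 i|.

Definition nonneg (n : nat) (v : 'rV[int]_n) : Prop := forall i, 0 <= v 0 i.

Definition expo (n : nat) (v : 'rV[int]_n) : 'X_{1..n} :=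
  [multinom absz (v ord0 i) | i < n].

Definition binom (k : fieldType) (n : nat) (u : 'rV[int]_n) : {mpoly k[n]} :=
  'X_[expo (posv u)] - 'X_[expo (negv u)].

Definition ideal_gen (k : fieldType) (n : nat) (S : {mpoly k[n]} -> Prop)
    (p : {mpoly k[n]}) : Prop :=
  exists r : seq ({mpoly k[n]} * {mpoly k[n]}),
    (forall q, q \in r -> S q.2) /\ p = \sum_(q <- r) q.1 * q.2.

Definition toric_ideal (k : fieldType) (d n : nat) (A : 'M[int]_(d, n))
    (p : {mpoly k[n]}) : Prop :=
  ideal_gen (fun q => exists u, inker A u /\ q = binom k u) p.

Definition dimker (d n : nat) (A : 'M[int]_(d, n)) : nat :=
  (n - \rank (map_mx (fun x : int => x%:~R : rat) A))%N.

Definition complete_intersection (k : fieldType) (d n : nat)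
    (A : 'M[int]_(d, n)) : Prop :=
  exists s : seq {mpoly k[n]}, size s = dimker A /\
    forall p, ideal_gen (fun q => q \in s) p <-> toric_ideal A p.

Definition markov_basis (k : fieldType) (d n : nat) (A : 'M[int]_(d, n))
    (B : 'rV[int]_n -> Prop) : Prop :=
  (forall u, B u -> inker A u) /\
  forall p, ideal_gen (fun q => exists u, B u /\ q = binom k u) p
            <-> toric_ideal A p.

Definition minimal_markov_basis (k : fieldType) (d n : nat)
    (A : 'M[int]_(d, n)) (B : 'rV[int]_n -> Prop) : Prop :=
  markov_basis k A B /\
  forall B' : 'rV[int]_n -> Prop,
    (forall u, B' u -> B u) -> markov_basis k A B' -> forall u, B u -> B' u.

Definition reduces (n : nat) (u z : 'rV[int]_n) : Prop :=
  exists p q : 'rV[int]_n,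
    ((p, q) = (posv z, negv z) \/ (p, q) = (negv z, posv z)) /\
    exists eps : int, (eps = 1 \/ eps = -1) /\
      nonneg (p + eps *: u) /\ norm1 (p + eps *: u - q) < norm1 z.

Definition reduces_set (n : nat) (B Z : 'rV[int]_n -> Prop) : Prop :=
  forall z, Z z -> z != 0 -> exists u, B u /\ reduces u z.

Definition distance_reducing (d n : nat) (A : 'M[int]_(d, n))
    (B : 'rV[int]_n -> Prop) : Prop :=
  reduces_set B (inker A).

Definition vec3 (x y z : int) : 'rV[int]_3 := \row_(i < 3) [:: x; y; z]`_i.

(* Since a1, a2, a3 > 0, a nonzero w in ker A has, up to sign, exactly one
   positive coordinate w_i, and a_i w_i is a nonnegative combination of the
   other two a_j.  The binomial of w lies in I_A, so some monomial of a move of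
   M divides x^(w^+) = x_i^(w_i); by the sign pattern of M this can only be
   x_i^(c_i), whence c_i <= w_i.  With these bounds, comparing the negative
   coordinates of w with the v_ij decides which move +-g_j, applied to w^+ or
   w^-, shortens w; condition (3) is needed only when w_2 > 0 and -w_1 < v21,
   or w_3 > 0 and -w_1 < v31.  If (3) fails, none of the twelve candidate steps
   shortens the circuit (0, a3, -a2) / gcd(a2, a3). *)

From HB Require Import structures.
From mathcomp Require Import all_boot all_order all_algebra.
From mathcomp Require Import mpoly.
From mathcomp Require Import zify.
Set Implicit Arguments.
Unset Strict Implicit.
Unset Printing Implicit Defensive.
Import Order.TTheory GRing.Theory Num.Theory.
Local Open Scope ring_scope.

Lemma ord3P (i : 'I_3) : i = 0 \/ i = 1 \/ i = 2%:R.
Proof.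
by case: i => [[|[|[|//]]] ?]; [left|right; left|right; right]; apply: val_inj.
Qed.

Lemma vec3_eq0 (x y z : int) : vec3 x y z = 0 <-> x = 0 /\ y = 0 /\ z = 0.
Proof.
split=> [e|[-> [-> ->]]].
  by move/rowP: e => e; move: (e 0) (e 1) (e 2%:R); rewrite !mxE.
by apply/rowP => i; rewrite !mxE; case: (ord3P i) => [->|[->|->]].
Qed.

Lemma vec3_eta (u : 'rV[int]_3) : u = vec3 (u 0 0) (u 0 1) (u 0 2%:R).
Proof. by apply/rowP => i; rewrite mxE; case: (ord3P i) => [->|[->|->]]. Qed.

Lemma vec3_opp (x y z : int) : - vec3 x y z = vec3 (- x) (- y) (- z).
Proof. by apply/rowP => i; rewrite !mxE; case: (ord3P i) => [->|[->|->]]. Qed.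

Lemma vec3_add (x y z x' y' z' : int) :
  vec3 x y z + vec3 x' y' z' = vec3 (x + x') (y + y') (z + z').
Proof. by apply/rowP => i; rewrite !mxE; case: (ord3P i) => [->|[->|->]]. Qed.

Lemma vec3_scale (e x y z : int) : e *: vec3 x y z = vec3 (e * x) (e * y) (e * z).
Proof. by apply/rowP => i; rewrite !mxE; case: (ord3P i) => [->|[->|->]]. Qed.

Lemma posv3 (x y z : int) :
  posv (vec3 x y z) = vec3 (Num.max x 0) (Num.max y 0) (Num.max z 0).
Proof. by apply/rowP => i; rewrite !mxE; case: (ord3P i) => [->|[->|->]]. Qed.

Lemma negv3 (x y z : int) :
  negv (vec3 x y z) = vec3 (Num.max (- x) 0) (Num.max (- y) 0) (Num.max (- z) 0).
Proof. by apply/rowP => i; rewrite !mxE; case: (ord3P i) => [->|[->|->]]. Qed.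

Lemma norm1_vec3 (x y z : int) : norm1 (vec3 x y z) = `|x| + `|y| + `|z|.
Proof. by rewrite /norm1 !big_ord_recr big_ord0 /= !mxE add0r. Qed.

Lemma nonneg_vec3 (x y z : int) :
  nonneg (vec3 x y z) <-> [/\ 0 <= x, 0 <= y & 0 <= z].
Proof.
split=> [nn|[x0 y0 z0] i]; first by move: (nn 0) (nn 1) (nn 2%:R); rewrite !mxE.
by rewrite mxE; case: (ord3P i) => [->|[->|->]].
Qed.

Lemma inker_vec3 (a1 a2 a3 x y z : int) :
  inker (vec3 a1 a2 a3) (vec3 x y z) <-> a1 * x + a2 * y + a3 * z = 0.
Proof.
rewrite /inker; have -> : vec3 a1 a2 a3 *m (vec3 x y z)^T = (a1 * x + a2 * y + a3 * z)%:M.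
  apply/matrixP => i j; rewrite (ord1 i) (ord1 j) !mxE.
  by rewrite !big_ord_recr big_ord0 /= !mxE add0r.
by split=> [/matrixP/(_ 0 0)|->]; rewrite ?mxE ?raddf0.
Qed.

Lemma expo_vec3_le (x y z x' y' z' : int) :
  (expo (vec3 x y z) <= expo (vec3 x' y' z'))%MM =
  [&& (absz x <= absz x')%N, (absz y <= absz y')%N & (absz z <= absz z')%N].
Proof.
apply/mnm_lepP/and3P => [le|[le1 le2 le3] i]; rewrite ?mnmE ?mxE.
  by move: (le 0) (le 1) (le 2%:R); rewrite !mnmE !mxE.
by case: (ord3P i) => [->|[->|->]].
Qed.

Section Reduction.
Variable n : nat.
Implicit Types u z : 'rV[int]_n.

Lemma posvN z : posv (- z) = negv z.
Proof. by apply/rowP => i; rewrite !mxE. Qed.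

Lemma posv_sub_negv z : posv z - negv z = z.
Proof. apply/rowP => i; rewrite !mxE; move: (z 0 i) => x; lia. Qed.

Lemma norm1N z : norm1 (- z) = norm1 z.
Proof. by apply: eq_bigr => i _; rewrite mxE normrN. Qed.

(* [s] selects (p, q) = (z^+, z^-) or (z^-, z^+), for which p - q = s z. *)
Lemma reducesP u z :
  reduces u z <-> exists s e : int, (s = 1 \/ s = -1) /\ (e = 1 \/ e = -1) /\
    nonneg (posv (s *: z) + e *: u) /\ norm1 (s *: z + e *: u) < norm1 z.
Proof.
have subN : negv z - posv z = - z by rewrite -opprB posv_sub_negv.
split=> [[p [q [[[-> ->]|[-> ->]] [e [E red]]]]]|[s [e [[->|->] [E red]]]]].
- rewrite addrAC posv_sub_negv in red.
  by exists 1, e; rewrite scale1r; split; first by left.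
- rewrite addrAC subN in red.
  by exists (-1), e; rewrite scaleN1r posvN; split; first by right.
- exists (posv z), (negv z); split; first by left.
  by exists e; rewrite scale1r in red; rewrite addrAC posv_sub_negv.
- exists (negv z), (posv z); split; first by right.
  by exists e; rewrite scaleN1r posvN in red; rewrite addrAC subN.
Qed.

Lemma reducesN u z : reduces u (- z) <-> reduces u z.
Proof.
suff imp : forall w, reduces u (- w) -> reduces u w.
  by split=> [/imp //|red]; apply: imp; rewrite opprK.
move=> w /reducesP[s [e [S [E red]]]]; apply/reducesP; exists (- s), e.
by rewrite scalerN -scaleNr norm1N in red; split=> //; case: S => ->; lia.
Qed.

End Reduction.

Lemma reduces_vec3P (u1 u2 u3 w1 w2 w3 : int) :
  reduces (vec3 u1 u2 u3) (vec3 w1 w2 w3) <->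
  exists s e : int, (s = 1 \/ s = -1) /\ (e = 1 \/ e = -1) /\
    0 <= Num.max (s * w1) 0 + e * u1 /\ 0 <= Num.max (s * w2) 0 + e * u2 /\
    0 <= Num.max (s * w3) 0 + e * u3 /\
    `|s * w1 + e * u1| + `|s * w2 + e * u2| + `|s * w3 + e * u3| <
      `|w1| + `|w2| + `|w3|.
Proof.
rewrite reducesP; split=> -[s [e [S [E red]]]]; exists s, e; do 2!split=> //;
  move: red; rewrite !(vec3_scale, vec3_add, posv3, norm1_vec3) nonneg_vec3.
  by move=> [[]].
by move=> [n1 [n2 [n3 lt]]].
Qed.

Definition moves3 (c1 c2 c3 v12 v13 v21 v23 v31 v32 : int) (g : 'rV[int]_3) : Prop :=
  g = vec3 (- c1) v12 v13 \/ g = vec3 v21 (- c2) v23 \/ g = vec3 v31 v32 (- c3).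

Section DistanceReduction.
Variables a1 a2 a3 c1 c2 c3 v12 v13 v21 v23 v31 v32 : int.
Hypotheses (a1_gt0 : 0 < a1) (lt_a1a2 : a1 < a2) (lt_a2a3 : a2 < a3).
Hypotheses (c1_gt0 : 0 < c1) (c2_gt0 : 0 < c2) (c3_gt0 : 0 < c3).
Hypotheses (v12_gt0 : 0 < v12) (v13_gt0 : 0 < v13) (v21_gt0 : 0 < v21).
Hypotheses (v23_gt0 : 0 < v23) (v31_gt0 : 0 < v31) (v32_gt0 : 0 < v32).
Hypotheses (g1_ker : a1 * c1 = a2 * v12 + a3 * v13)
           (g2_ker : a2 * c2 = a1 * v21 + a3 * v23)
           (g3_ker : a3 * c3 = a1 * v31 + a2 * v32).
Hypothesis c1_le : forall X Y Z : int, 0 <= Y -> 0 <= Z -> 0 < Y + Z ->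
  a1 * X = a2 * Y + a3 * Z -> c1 <= X.
Hypothesis c2_le : forall X Y Z : int, 0 <= Y -> 0 <= Z -> 0 < Y + Z ->
  a2 * X = a1 * Y + a3 * Z -> c2 <= X.
Hypothesis c3_le : forall X Y Z : int, 0 <= Y -> 0 <= Z -> 0 < Y + Z ->
  a3 * X = a1 * Y + a2 * Z -> c3 <= X.

Let g1 := vec3 (- c1) v12 v13.
Let g2 := vec3 v21 (- c2) v23.
Let g3 := vec3 v31 v32 (- c3).

Lemma v12_add_v13_lt_c1 : v12 + v13 < c1.
Proof. nia. Qed.

Lemma v23_lt_c2 : v23 < c2.
Proof. nia. Qed.

Lemma v32_lt_c2 : v32 < c2.
Proof.
rewrite ltNge; apply/negP => le_c2v32.
(* g3 - g2 gives a3 (c3 - v23) = a1 (v21 + v31) + a2 (v32 - c2). *)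
by have := c3_le (X := c3 - v23) (Y := v21 + v31) (Z := v32 - c2); lia.
Qed.

Lemma v23_lt_c3 : v23 < c3.
Proof.
rewrite ltNge; apply/negP => le_c3v23.
by have := c2_le (X := c2 - v32) (Y := v21 + v31) (Z := v23 - c3); lia.
Qed.

Lemma reduces_g1 X Y Z : 0 <= Y -> 0 <= Z -> 0 < Y + Z ->
  a1 * X = a2 * Y + a3 * Z -> reduces g1 (vec3 X (- Y) (- Z)).
Proof.
move=> Y0 Z0 YZ0 eX; have le_c1X := c1_le Y0 Z0 YZ0 eX.
have lt_c1 := v12_add_v13_lt_c1.
by apply/reduces_vec3P; exists 1, 1; lia.
Qed.

Lemma reduces_g2_or_g3 X Y Z : v21 < c2 + v23 \/ v31 < v32 + c3 ->
  0 <= Y -> 0 <= Z -> 0 < Y + Z -> a2 * X = a1 * Y + a3 * Z ->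
  reduces g2 (vec3 (- Y) X (- Z)) \/ reduces g3 (vec3 (- Y) X (- Z)).
Proof.
move=> cond Y0 Z0 YZ0 eX; have le_c2X := c2_le Y0 Z0 YZ0 eX.
have lt_v23c2 := v23_lt_c2; have lt_v32c2 := v32_lt_c2.
have [le_v21Y|lt_Yv21] := lerP v21 Y.
  left; apply/reduces_vec3P.
  by have [le_v23Z|lt_Zv23] := lerP v23 Z; [exists (-1), (-1) | exists 1, 1]; lia.
have lt_v23Z : v23 < Z.
  (* otherwise a2 X = a1 Y + a3 Z < a1 v21 + a3 v23 = a2 c2 *)
  rewrite ltNge; apply/negP => le_Zv23.
  have : a1 * Y + a3 * Z < a1 * v21 + a3 * v23 by nia.
  nia.
have le_c3Z : c3 <= Z - v23 by apply: (c3_le (Y := v21 - Y) (Z := X - c2)); lia.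
case: cond => cond; [left|right]; apply/reduces_vec3P.
  by exists 1, 1; lia.
by exists (-1), 1; lia.
Qed.

Lemma reduces_g1_g2_or_g3 X Y Z : v21 < c2 + v23 \/ v31 < v32 + c3 ->
  0 <= Y -> 0 <= Z -> 0 < Y + Z -> a3 * X = a1 * Y + a2 * Z ->
  reduces g1 (vec3 (- Y) (- Z) X) \/ reduces g2 (vec3 (- Y) (- Z) X) \/
  reduces g3 (vec3 (- Y) (- Z) X).
Proof.
move=> cond Y0 Z0 YZ0 eX; have le_c3X := c3_le Y0 Z0 YZ0 eX.
have lt_c1 := v12_add_v13_lt_c1; have lt_v23c3 := v23_lt_c3.
have [le_v31Y|lt_Yv31] := lerP v31 Y.
  have [le_v32Z|lt_Zv32] := lerP v32 Z.
    by right; right; apply/reduces_vec3P; exists (-1), (-1); lia.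
  have lt_v31Y : v31 < Y.
    rewrite ltNge; apply/negP => le_Yv31.
    have : a1 * Y + a2 * Z < a1 * v31 + a2 * v32 by nia.
    nia.
  have le_c1Y : c1 <= Y - v31 by apply: (c1_le (Y := v32 - Z) (Z := X - c3)); lia.
  by left; apply/reduces_vec3P; exists (-1), 1; lia.
have lt_v32Z : v32 < Z.
  rewrite ltNge; apply/negP => le_Zv32.
  have : a1 * Y + a2 * Z < a1 * v31 + a2 * v32 by nia.
  nia.
have le_c2Z : c2 <= Z - v32 by apply: (c2_le (Y := v31 - Y) (Z := X - c3)); lia.
have [lt_v31|le_v31] := ltP v31 (v32 + c3).
  by right; right; apply/reduces_vec3P; exists 1, 1; lia.
have {cond} lt_v21 : v21 < c2 + v23 by case: cond; lia.
by right; left; apply/reduces_vec3P; exists (-1), 1; lia.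
Qed.

Lemma moves3_reduce_one_positive x y z : v21 < c2 + v23 \/ v31 < v32 + c3 ->
  a1 * x + a2 * y + a3 * z = 0 ->
  (0 < x /\ y <= 0 /\ z <= 0) \/ (x <= 0 /\ 0 < y /\ z <= 0) \/
  (x <= 0 /\ y <= 0 /\ 0 < z) ->
  exists u, moves3 c1 c2 c3 v12 v13 v21 v23 v31 v32 u /\ reduces u (vec3 x y z).
Proof.
move=> cond ker [[x0 [y0 z0]]|[[x0 [y0 z0]]|[x0 [y0 z0]]]].
- exists g1; split; first by left.
  by rewrite -[y]opprK -[z]opprK; apply: reduces_g1; nia.
- have [red|red] : reduces g2 (vec3 x y z) \/ reduces g3 (vec3 x y z).
    by rewrite -[x]opprK -[z]opprK; apply: reduces_g2_or_g3; nia.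
  + by exists g2; split; [right; left|].
  + by exists g3; split; [right; right|].
- have [red|[red|red]] : reduces g1 (vec3 x y z) \/ reduces g2 (vec3 x y z) \/
      reduces g3 (vec3 x y z).
    by rewrite -[x]opprK -[y]opprK; apply: reduces_g1_g2_or_g3; nia.
  + by exists g1; split; [left|].
  + by exists g2; split; [right; left|].
  + by exists g3; split; [right; right|].
Qed.

Lemma moves3_distance_reducing : v21 < c2 + v23 \/ v31 < v32 + c3 ->
  distance_reducing (vec3 a1 a2 a3) (moves3 c1 c2 c3 v12 v13 v21 v23 v31 v32).
Proof.
move=> cond w; rewrite [w]vec3_eta inker_vec3.
move: (w 0 0) (w 0 1) (w 0 2%:R) => w1 w2 w3 ker /eqP /vec3_eq0 nz.
have [pat|pat] : ((0 < w1 /\ w2 <= 0 /\ w3 <= 0) \/ (w1 <= 0 /\ 0 < w2 /\ w3 <= 0) \/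
      (w1 <= 0 /\ w2 <= 0 /\ 0 < w3)) \/
    ((0 < - w1 /\ - w2 <= 0 /\ - w3 <= 0) \/ (- w1 <= 0 /\ 0 < - w2 /\ - w3 <= 0) \/
      (- w1 <= 0 /\ - w2 <= 0 /\ 0 < - w3)) by nia.
  exact: moves3_reduce_one_positive.
have ker' : a1 * - w1 + a2 * - w2 + a3 * - w3 = 0 by lia.
have [u [Mu red]] := moves3_reduce_one_positive cond ker' pat.
by exists u; split; rewrite // -reducesN vec3_opp.
Qed.

End DistanceReduction.

Lemma moves3_circuit_not_reduced (c1 c2 c3 v12 v13 v21 v23 v31 v32 a b : int) u :
  moves3 c1 c2 c3 v12 v13 v21 v23 v31 v32 u ->
  0 < c1 -> 0 < c2 -> 0 < c3 -> 0 < v12 -> 0 < v13 -> 0 < v23 -> 0 < v32 ->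
  0 <= a -> 0 <= b -> c2 + v23 <= v21 -> v32 + c3 <= v31 -> ~ reduces u (vec3 0 b (- a)).
Proof.
move=> Mu *; case: Mu => [|[|]] -> /reduces_vec3P[s [e [[->|->] [[->|->] red]]]]; lia.
Qed.

Lemma mcoeff_mulX_eq0 (R : ringType) n (p : {mpoly R[n]}) (m m0 : 'X_{1..n}) :
  ~~ (m <= m0)%MM -> (p * 'X_[m])@_m0 = 0.
Proof.
move=> nle; rewrite mcoeffM big1 // => -[m1 m2] /= /eqP e.
rewrite mcoeffX; case: eqP => [em|_]; last by rewrite mulr0.
by case/negP: nle; apply/mnm_lepP => i; rewrite e em mnmDE leq_addl.
Qed.

Lemma expo_negv_neq_posv n (u : 'rV[int]_n) :
  u != 0 -> expo (negv u) != expo (posv u).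
Proof.
apply: contra => /eqP e; apply/eqP/rowP => i.
move/(congr1 (fun m : 'X_{1..n} => m i)): e.
by rewrite !mnmE !mxE; move: (u 0 i) => x; lia.
Qed.

Lemma markov_basis_divisor (k : fieldType) d n (A : 'M[int]_(d, n))
    (B : 'rV[int]_n -> Prop) (u : 'rV[int]_n) :
  markov_basis k A B -> inker A u -> u != 0 ->
  exists2 g, B g & (expo (posv g) <= expo (posv u))%MM ||
                   (expo (negv g) <= expo (posv u))%MM.
Proof.
move=> [_ gen] uA u0; set m := expo (posv u).
have /gen[r [rB er]] : toric_ideal A (binom k u).
  exists [:: (1, binom k u)]; split; last by rewrite big_seq1 mul1r.
  by move=> q; rewrite mem_seq1 => /eqP -> /=; exists u.
have : (binom k u)@_m != 0.
  by rewrite mcoeffB !mcoeffX eqxx /m (negbTE (expo_negv_neq_posv u0)) subr0 oner_neq0.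
(* some summand of the representation of binom k u must contribute to the
   coefficient of x^(u^+), which forces a monomial of its generator to divide it *)
rewrite er raddf_sum /=.
have [/hasP[q qr nz] _ | /hasPn q0] := boolP (has (fun q => (q.1 * q.2)@_m != 0) r).
  have [g [Bg def_q2]] := rB q qr; exists g => //.
  apply: contraR nz => /norP[le1 le2].
  by rewrite def_q2 /binom mulrBr mcoeffB !mcoeff_mulX_eq0 ?subr0.
by rewrite big1_seq ?eqxx // => q /q0 /negPn /eqP.
Qed.

Section MarkovMoves.
Variables (k : fieldType) (a1 a2 a3 c1 c2 c3 v12 v13 v21 v23 v31 v32 : int).
Hypothesis markovM : markov_basis k (vec3 a1 a2 a3) (moves3 c1 c2 c3 v12 v13 v21 v23 v31 v32).
Hypotheses (a1_gt0 : 0 < a1) (lt_a1a2 : a1 < a2) (lt_a2a3 : a2 < a3).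
Hypotheses (c1_gt0 : 0 < c1) (c2_gt0 : 0 < c2) (c3_gt0 : 0 < c3).
Hypotheses (v12_gt0 : 0 < v12) (v13_gt0 : 0 < v13) (v21_gt0 : 0 < v21).
Hypotheses (v23_gt0 : 0 < v23) (v31_gt0 : 0 < v31) (v32_gt0 : 0 < v32).

Lemma markov_moves3_c1_le (X Y Z : int) : 0 <= Y -> 0 <= Z -> 0 < Y + Z ->
  a1 * X = a2 * Y + a3 * Z -> c1 <= X.
Proof.
move=> Y0 Z0 YZ0 eX; rewrite leNgt; apply/negP => ltX.
have uker : inker (vec3 a1 a2 a3) (vec3 X (- Y) (- Z)) by rewrite inker_vec3; lia.
have unz : vec3 X (- Y) (- Z) != 0 by apply/eqP => /vec3_eq0; lia.
have [g Mg] := markov_basis_divisor markovM uker unz.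
by case: Mg => [|[|]] ->; rewrite !posv3 negv3 !expo_vec3_le => /orP[/and3P[] | /and3P[]]; lia.
Qed.

Lemma markov_moves3_c2_le (X Y Z : int) : 0 <= Y -> 0 <= Z -> 0 < Y + Z ->
  a2 * X = a1 * Y + a3 * Z -> c2 <= X.
Proof.
move=> Y0 Z0 YZ0 eX; rewrite leNgt; apply/negP => ltX.
have uker : inker (vec3 a1 a2 a3) (vec3 (- Y) X (- Z)) by rewrite inker_vec3; lia.
have unz : vec3 (- Y) X (- Z) != 0 by apply/eqP => /vec3_eq0; lia.
have [g Mg] := markov_basis_divisor markovM uker unz.
by case: Mg => [|[|]] ->; rewrite !posv3 negv3 !expo_vec3_le => /orP[/and3P[] | /and3P[]]; lia.
Qed.

Lemma markov_moves3_c3_le (X Y Z : int) : 0 <= Y -> 0 <= Z -> 0 < Y + Z ->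
  a3 * X = a1 * Y + a2 * Z -> c3 <= X.
Proof.
move=> Y0 Z0 YZ0 eX; rewrite leNgt; apply/negP => ltX.
have uker : inker (vec3 a1 a2 a3) (vec3 (- Y) (- Z) X) by rewrite inker_vec3; lia.
have unz : vec3 (- Y) (- Z) X != 0 by apply/eqP => /vec3_eq0; lia.
have [g Mg] := markov_basis_divisor markovM uker unz.
by case: Mg => [|[|]] ->; rewrite !posv3 negv3 !expo_vec3_le => /orP[/and3P[] | /and3P[]]; lia.
Qed.

Lemma markov_moves3_distance_reducing : v21 < c2 + v23 \/ v31 < v32 + c3 ->
  distance_reducing (vec3 a1 a2 a3) (moves3 c1 c2 c3 v12 v13 v21 v23 v31 v32).
Proof.
have /inker_vec3 ker1 := markovM.1 _ (or_introl erefl).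
have /inker_vec3 ker2 := markovM.1 _ (or_intror (or_introl erefl)).
have /inker_vec3 ker3 := markovM.1 _ (or_intror (or_intror erefl)).
apply: moves3_distance_reducing => //; try lia.
- exact: markov_moves3_c1_le.
- exact: markov_moves3_c2_le.
- exact: markov_moves3_c3_le.
Qed.

End MarkovMoves.

Lemma circuit_in_kernel (a1 a2 a3 : nat) : (a1 < a2)%N -> (a2 < a3)%N ->
  let gam := gcdn a2 a3 in let z := vec3 0 (a3 %/ gam)%N%:Z (- (a2 %/ gam)%N%:Z) in
  inker (vec3 a1%:Z a2%:Z a3%:Z) z /\ z != 0.
Proof.
move=> lt_a1a2 lt_a2a3 gam z.
have gam_gt0 : (0 < gam)%N by rewrite gcdn_gt0 (leq_ltn_trans _ lt_a1a2).
have : (a2 * (a3 %/ gam) = a3 * (a2 %/ gam))%N.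
  by rewrite !muln_divA ?dvdn_gcdr ?dvdn_gcdl // mulnC.
have : (0 < a3 %/ gam)%N.
  by rewrite divn_gt0 // dvdn_leq ?dvdn_gcdr // (leq_ltn_trans _ lt_a2a3).
rewrite /z inker_vec3; move: (a3 %/ gam)%N (a2 %/ gam)%N => b a b_gt0 eab.
by split; [lia | apply/eqP => /vec3_eq0; lia].
Qed.

Theorem theorem3p6 (k : fieldType) (a1 a2 a3 : nat)
    (c1 c2 c3 v12 v13 v21 v23 v31 v32 : nat) :
  (0 < a1)%N -> (a1 < a2)%N -> (a2 < a3)%N ->
  ~ complete_intersection k (vec3 a1%:Z a2%:Z a3%:Z) ->
  (0 < c1)%N -> (0 < c2)%N -> (0 < c3)%N ->
  (0 < v12)%N -> (0 < v13)%N -> (0 < v21)%N ->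
  (0 < v23)%N -> (0 < v31)%N -> (0 < v32)%N ->
  let g1 := vec3 (- c1%:Z) v12%:Z v13%:Z in
  let g2 := vec3 v21%:Z (- c2%:Z) v23%:Z in
  let g3 := vec3 v31%:Z v32%:Z (- c3%:Z) in
  let M := fun g : 'rV[int]_3 => g = g1 \/ g = g2 \/ g = g3 in
  minimal_markov_basis k (vec3 a1%:Z a2%:Z a3%:Z) M ->
  let gam := gcdn a2 a3 in
  let z := vec3 0 (a3 %/ gam)%N%:Z (- (a2 %/ gam)%N%:Z) in
  (distance_reducing (vec3 a1%:Z a2%:Z a3%:Z) M <-> reduces_set M (fun w => w = z)) /\
  (reduces_set M (fun w => w = z) <-> ((v21 < c2 + v23)%N \/ (v31 < v32 + c3)%N)).
Proof.
move=> a1_gt0 lt_a1a2 lt_a2a3 _ c1_gt0 c2_gt0 c3_gt0 v12_gt0 v13_gt0 v21_gt0 v23_gt0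
  v31_gt0 v32_gt0 g1 g2 g3 M [markovM _] gam z.
have reducing : (v21 < c2 + v23)%N \/ (v31 < v32 + c3)%N ->
    distance_reducing (vec3 a1 a2 a3) M.
  move=> cond; apply: (@markov_moves3_distance_reducing k a1 a2 a3 c1 c2 c3
    v12 v13 v21 v23 v31 v32) => //; lia.
have [z_ker z_nz] := circuit_in_kernel lt_a1a2 lt_a2a3.
have z_reduced_cond : reduces_set M (eq^~ z) -> (v21 < c2 + v23)%N \/ (v31 < v32 + c3)%N.
  move=> red; have [lt_v21|le_v21] := ltnP v21 (c2 + v23); first by left.
  have [lt_v31|le_v31] := ltnP v31 (v32 + c3); first by right.
  have [u [Mu red_z]] := red z erefl z_nz; exfalso; move: red_z.
  by apply: (@moves3_circuit_not_reduced c1 c2 c3 v12 v13 v21 v23 v31 v32 _ _ u Mu) => //; lia.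
split; split.
- by move=> dr w -> nz; apply: dr.
- by move/z_reduced_cond/reducing.
- exact: z_reduced_cond.
- by move=> cond w -> nz; apply: reducing.
Qed.
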